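(* Let $n\ge 1$ and $U_n$ the family of bounded subsets of $\mathbb R^n$. (a) For every function $g:\mathbb R^n\to B_2$ whose support $\mathrm{supp}\,g=\{x:g(x)=1\}$ is locally finite, the function $\mu^g:U_n\to B_2$, $\mu^g(A)=\pi(|A\cap \mathrm{supp}\,g|)$, is a derivable measure, and $d\mu^g(x)=g(x)$ for all $x\in\mathbb R^n$. (b) Conversely, if $\mu:U_n\to B_2$ is a derivable measure, then there exists a unique function $g:\mathbb R^n\to B_2$ with locally finite support such that $\mu(A)=\pi(|A\cap\mathrm{supp}\,g|)$ for all $A\in U_n$; moreover $d\mu(x)=g(x)$ for all $x\in\mathbb R^n$.
   Context: $B_2=\{0,1\}$. $H\subset\mathbb R^n$ is locally finite if $A\cap H$ is finite for every bounded $A$. $\pi(m)=1$ if $m$ is odd, $0$ if even. $\mu$ is a measure if for every sequence of pairwise disjoint sets of $U_n$ whose union is in $U_n$, only finitely many have $\mu$-value 1 and $\mu$ of the union is their number modulo 2. $d(B)=\sup_{x,y\in B}\|x-y\|$. $\mu$ is derivable at $x$ if there exist $\varepsilon>0$, $a\in B_2$ with $\mu(B)=a$ for all $B\in U_n$ containing $x$ with $d(B)<\varepsilon$; then $d\mu(x)=a$. $\mu$ is derivable if it is derivable at every point of $\mathbb R^n$. *)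

From HB Require Import structures.
From mathcomp Require Import all_boot all_order all_algebra.
From mathcomp Require Import finmap.
From mathcomp Require Import all_classical all_reals.
Set Implicit Arguments. Unset Strict Implicit. Unset Printing Implicit Defensive.
Import Order.TTheory GRing.Theory Num.Theory.
Local Open Scope classical_set_scope.
Local Open Scope ring_scope.

Section Defs.
Variables (R : realType) (n : nat).
Local Notation pt := 'rV[R]_n.

Definition enorm (x : pt) : R := Num.sqrt (\sum_(i < n) x ord0 i ^+ 2).

Definition bnd (A : set pt) : Prop := exists r : R, forall x, A x -> enorm x <= r.

Definition locally_finite (H : set pt) : Prop :=
  forall A, bnd A -> finite_set (A `&` H).

Definition par (m : nat) : bool := odd m.

Definition diam (B : set pt) : R :=
  sup [set r | exists x y, B x /\ B y /\ r = enorm (x - y)].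

(* B_2-valued measure on U_n (values of mu outside U_n are irrelevant) *)
Definition is_measure (mu : set pt -> bool) : Prop :=
  forall A : nat -> set pt,
    (forall k, bnd (A k)) -> trivIset setT A -> bnd (\bigcup_k A k) ->
    exists s : seq nat, uniq s /\ (forall k, mu (A k) = true <-> k \in s) /\
      mu (\bigcup_k A k) = par (size s).

(* dmu_at mu x a : there is eps > 0 with mu(B) = a for all B in U_n
   containing x with d(B) < eps; mu is derivable at x iff such an a exists,
   and then d mu(x) = a (a is unique, taking B = {x}). *)
Definition dmu_at (mu : set pt -> bool) (x : pt) (a : bool) : Prop :=
  exists2 eps : R, 0 < eps &
    forall B, bnd B -> B x -> diam B < eps -> mu B = a.

Definition derivable_at (mu : set pt -> bool) (x : pt) : Prop :=
  exists a, dmu_at mu x a.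

Definition derivable (mu : set pt -> bool) : Prop := forall x, derivable_at mu x.

Definition supp (g : pt -> bool) : set pt := [set x | g x = true].

Definition mu_of (g : pt -> bool) (A : set pt) : bool :=
  par #|` fset_set (A `&` supp g)|.

End Defs.

From HB Require Import structures.
From mathcomp Require Import all_boot all_order all_algebra.
From mathcomp Require Import finmap.
From mathcomp Require Import all_classical all_reals.
From mathcomp Require Import topology normedtype.
From mathcomp Require Import lra.
Set Implicit Arguments. Unset Strict Implicit. Unset Printing Implicit Defensive.
Import Order.TTheory GRing.Theory Num.Theory.
Import numFieldNormedType.Exports.
Local Open Scope classical_set_scope.
Local Open Scope ring_scope.

(** (a) A bounded set meets the locally finite set [supp g] in finitely many
    points, so a disjoint family with bounded union has only finitely many
    members meeting [supp g], and the parity of a finite disjoint union is the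
    sum of the parities. Near [x], a set of small diameter meets [supp g] at
    most in [x], whence [d mu^g (x) = g x].

    (b) Put [g x := mu {x}]. Infinitely many points of [supp g] in a bounded set
    would give a disjoint family with infinitely many members of measure 1, so
    [supp g] is locally finite. Derivability at [c] gives a ball around [c] on
    which every set containing [c] has measure [g c]; adding [c] to a set of
    that ball missing [c] then shows, by additivity, that it has measure 0, so
    [mu] and [mu^g] agree on subsets of the ball. A finite subcover of a
    bounded set and additivity give [mu = mu^g] on [U_n]; uniqueness holds
    because [mu^g {x} = g x]. *)

Lemma nat_notin_seq (s : seq nat) : exists k, k \notin s.
Proof.
exists (\max_(i <- s) i).+1; apply/negP => /(@leq_bigmax_seq _ _ xpredT id) /=.
by rewrite ltnn => /(_ isT).
Qed.

Lemma odd_sum_count (I : Type) (r : seq I) (c : I -> nat) :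
  odd (\sum_(i <- r) c i) = odd (count (fun i => odd (c i)) r).
Proof. by elim: r => [|a r IH]; rewrite ?big_nil // big_cons /= !oddD IH oddb. Qed.

Lemma seq_pos_lbound (T : eqType) (R : realDomainType) (f : T -> R) (s : seq T) :
  exists2 e : R, 0 < e & forall y, y \in s -> 0 < f y -> e <= f y.
Proof.
elim: s => [|a s [e e0 he]]; first by exists 1.
exists (if 0 < f a then Num.min e (f a) else e) => [|y].
  by case: ifP => // fa; rewrite lt_min e0.
rewrite inE => /orP[/eqP-> ->|ys fy]; first by rewrite ge_min lexx orbT.
by case: ifP => _; rewrite ?ge_min he.
Qed.

Lemma trivIset_finite_meet (T : Type) (A : nat -> set T) (S : set T) :
  trivIset setT A -> finite_set (\bigcup_k A k `&` S) ->
  exists N, forall k, (N <= k)%N -> A k `&` S = set0.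
Proof.
move=> tA fS; pose idx y := xget 0%N [set k | A k y].
have idxE k y : A k y -> idx y = k.
  move=> Aky; apply: tA => //; exists y; split => //.
  exact: (xgetI 0%N (P := [set k | A k y]) Aky).
set K := idx @` (\bigcup_k A k `&` S).
have fK : finite_set K := finite_image idx fS.
exists (\max_(k <- fset_set K) k).+1 => k Nk; apply/seteqP; split => y // [Aky Sy].
have Kk : k \in fset_set K.
  by rewrite in_fset_set // mem_set //; exists y; [split => //; exists k | exact: idxE].
by have := @leq_bigmax_seq _ _ xpredT id k Kk isT; rewrite leqNgt Nk.
Qed.

Section Geometry.
Variables (R : realType) (n : nat).
Local Notation pt := 'rV[R]_n.
Implicit Types (x y c : pt) (A B : set pt).

Lemma enorm_ge0 x : 0 <= enorm x. Proof. exact: sqrtr_ge0. Qed.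

Lemma coord_le_enorm x i : `|x ord0 i| <= enorm x.
Proof.
rewrite /enorm -sqrtr_sqr ler_sqrt; last by apply: sumr_ge0 => j _; exact: sqr_ge0.
by rewrite (bigD1 i) //= lerDl; apply: sumr_ge0 => j _; exact: sqr_ge0.
Qed.

Lemma enorm_le_coord x (m : R) : 0 <= m -> (forall i, `|x ord0 i| <= m) ->
  enorm x <= n%:R * m.
Proof.
move=> m0 hx; rewrite /enorm -[n%:R * m]ger0_norm ?mulr_ge0 // -sqrtr_sqr.
rewrite ler_sqrt ?sqr_ge0 //; apply: (@le_trans _ _ (\sum_(i < n) m ^+ 2)).
  by apply: ler_sum => i _; rewrite -real_normK ?num_real // lerXn2r ?nnegrE.
rewrite sumr_const card_ord -[m ^+ 2 *+ n]mulr_natl exprMn.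
apply: (ler_wpM2r (sqr_ge0 m)).
by rewrite -natrX ler_nat; case: n => // k; rewrite expnS leq_pmulr ?expn_gt0.
Qed.

Lemma enorm_gt0 x : x != 0 -> 0 < enorm x.
Proof.
move=> x0; rewrite lt_neqAle enorm_ge0 andbT; apply: contra x0 => /eqP e0.
by apply/eqP/rowP => i; have := coord_le_enorm x i; rewrite -e0 normr_le0 mxE => /eqP.
Qed.

Lemma ballE c r y : ball c r y <-> 0 < r /\ forall i, `|c ord0 i - y ord0 i| < r.
Proof.
split=> -[r0 h]; split=> // i; first exact: h.
by move=> j; rewrite [i]ord1; exact: h.
Qed.

Lemma bnd_sub A B : A `<=` B -> bnd B -> bnd A.
Proof. by move=> AB [r hr]; exists r => x /AB /hr. Qed.

Lemma bnd0 : bnd (set0 : set pt). Proof. by exists 0. Qed.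

Lemma bnd1 x : bnd [set x]. Proof. by exists (enorm x) => y ->. Qed.

Lemma bnd_ball c r : bnd (ball c r).
Proof.
exists (n%:R * (enorm c + r)) => y /ballE[r0 hy].
apply: enorm_le_coord => [|i]; first by rewrite addr_ge0 ?enorm_ge0 ?ltW.
rewrite -[y ord0 i](subrKC (c ord0 i)) (le_trans (ler_normD _ _)) //.
by rewrite lerD ?coord_le_enorm // distrC ltW.
Qed.

Lemma diam_le B d : 0 <= d -> (forall x y, B x -> B y -> enorm (x - y) <= d) ->
  diam B <= d.
Proof.
move=> d0 hB; rewrite /diam; set E := [set r | _].
have [->|/set0P E0] := eqVneq E set0; first by rewrite sup0.
by apply: ge_sup => // _ [u [v [Bu [Bv ->]]]]; exact: hB.
Qed.

Lemma diam_ge B x y : bnd B -> B x -> B y -> enorm (x - y) <= diam B.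
Proof.
move=> [r hr] Bx By; apply: sup_upper_bound; last by exists x, y.
split; first by exists (enorm (x - y)), x, y.
have r0 : 0 <= r by apply: le_trans (enorm_ge0 x) (hr _ Bx).
exists (n%:R * (r + r)) => _ [u [v [Bu [Bv ->]]]].
apply: enorm_le_coord => [|i]; first by rewrite addr_ge0.
rewrite !mxE (le_trans (ler_normB _ _)) //.
by apply: lerD; apply: le_trans (coord_le_enorm _ _) (hr _ _).
Qed.

Lemma diam_sub_ball B c r : 0 <= r -> B `<=` ball c r -> diam B <= n%:R * (r + r).
Proof.
move=> r0 Bc; apply: diam_le => [|x y /Bc/ballE[_ hx] /Bc/ballE[_ hy]].
  by rewrite mulr_ge0 ?addr_ge0.
apply: enorm_le_coord => [|i]; first by rewrite addr_ge0.
have -> : (x - y) ord0 i = (c ord0 i - y ord0 i) - (c ord0 i - x ord0 i).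
  by rewrite !mxE opprB [RHS]addrC addrA subrK.
by rewrite (le_trans (ler_normB _ _)) // lerD ?ltW ?hx ?hy.
Qed.

End Geometry.

Section Atoms.
Variables (R : realType) (n : nat).
Local Notation pt := 'rV[R]_n.
Implicit Types (mu : set pt -> bool) (g : pt -> bool) (c x y : pt) (P : set pt).

Definition atoms mu x := mu [set x].

Lemma mu_of_eq_false g P : (forall y, P y -> g y = false) -> mu_of g P = false.
Proof.
move=> Pg; rewrite /mu_of (_ : _ `&` _ = set0) ?fset_set0 ?cardfs0 //.
by apply/seteqP; split => y // [/Pg]; rewrite /supp /= => ->.
Qed.

Lemma mu_of_local g P c : P c -> (forall y, P y -> g y -> y = c) -> mu_of g P = g c.
Proof.
move=> Pc Pg; case gc : (g c).
  rewrite /mu_of (_ : _ `&` _ = [set c]) ?fset_set1 ?cardfs1 //.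
  by apply/seteqP; split => [y [Py /(Pg y Py)]|y ->].
by apply: mu_of_eq_false => y Py; apply: contraFF gc => gy; rewrite -(Pg y Py gy).
Qed.

Lemma mu_of_set1 g c : mu_of g [set c] = g c.
Proof. exact: mu_of_local. Qed.

Lemma mu_of_measure g : locally_finite (supp g) -> is_measure (mu_of g).
Proof.
move=> lf A bA tA bU; set S := supp g.
have [N AS0] := trivIset_finite_meet (S := S) tA (lf _ bU).
have mu_of_A0 k : (N <= k)%N -> mu_of g (A k) = false.
  by move=> /AS0 AkS; rewrite /mu_of -/S AkS fset_set0 cardfs0.
exists [seq k <- iota 0 N | mu_of g (A k)]; split; [|split].
- by rewrite filter_uniq // iota_uniq.
- move=> k; rewrite mem_filter mem_iota add0n /=.
  split=> [Ak|/andP[] //]; rewrite Ak ltnNge /=.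
  by apply: contraTN Ak => /mu_of_A0 ->.
rewrite /mu_of -/S.
have -> : \bigcup_k A k `&` S = \big[setU/set0]_(k < N) (A k `&` S).
  rewrite -(bigcup_mkord N (fun k => A k `&` S)); apply/seteqP.
  split=> [y [[k _ Aky] Sy]|y [k _ [Aky Sy]]].
    exists k => //=; rewrite ltnNge; apply/negP => /AS0 AkS.
    by have : (A k `&` S) y by []; rewrite AkS.
  by split => //; exists k.
rewrite -(@trivIset_sum_card _ (fun k => A k `&` S)); last exact: trivIset_setIr.
  rewrite -(big_mkord xpredT (fun k => #|` fset_set (A k `&` S)|)) /par.
  by rewrite odd_sum_count size_filter /index_iota subn0.
by move=> k; exact: lf.
Qed.

Lemma mu_of_dmu_at g x : locally_finite (supp g) -> dmu_at (mu_of g) x (g x).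
Proof.
move=> lf; have fQ := lf _ (bnd_ball x 1).
have [e e0 he] :=
  seq_pos_lbound (fun y => enorm (y - x)) (fset_set (ball x 1 `&` supp g)).
exists (Num.min e 1) => [|B bB Bx dB]; first by rewrite lt_min e0 ltr01.
apply: mu_of_local => // y By gy.
have := le_lt_trans (diam_ge bB By Bx) dB; rewrite lt_min => /andP[ye y1].
apply/eqP; apply: contraTT ye => yx; rewrite -leNgt; apply: he.
  rewrite in_fset_set // mem_set //; split => //; apply/ballE; split => // i.
  rewrite distrC (le_lt_trans _ y1) //.
  by have := coord_le_enorm (y - x) i; rewrite !mxE.
by apply: enorm_gt0; rewrite subr_eq0.
Qed.

End Atoms.

Lemma dmu_at_ball (R : realType) (n : nat) (mu : set 'rV[R]_n -> bool) c a :
  dmu_at mu c a -> exists2 r : R, 0 < r & forall B, B `<=` ball c r -> B c -> mu B = a.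
Proof.
move=> [e e0 he]; have d0 : 0 < 2 * n%:R + 2 :> R by rewrite ltr_wpDl ?mulr_ge0.
set r := e / (2 * n%:R + 2); have r0 : 0 < r by rewrite divr_gt0.
exists r => // B Bc Bx; apply: he => //; first exact: bnd_sub (bnd_ball c r).
apply: le_lt_trans (diam_sub_ball (ltW r0) Bc) _.
have -> : e = r * (2 * n%:R + 2) by rewrite divfK ?gt_eqF.
nra.
Qed.

Lemma dmu_at_set1 (R : realType) (n : nat) (mu : set 'rV[R]_n -> bool) c a :
  dmu_at mu c a -> a = mu [set c].
Proof. by move=> /dmu_at_ball[r r0 h]; rewrite h // => y ->; exact: ballxx. Qed.

Section Measures.
Variables (R : realType) (n : nat) (mu : set 'rV[R]_n -> bool).
Hypothesis mu_measure : is_measure mu.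
Local Notation pt := 'rV[R]_n.
Implicit Types (A B P : set pt).

Lemma measure0 : mu set0 = false.
Proof.
have b0 : bnd (\bigcup_(k : nat) (set0 : set pt)) by rewrite bigcup0 //; exact: bnd0.
have [s [_ [hs _]]] := mu_measure (fun=> bnd0 R n) (@trivIset_set0 _ _ setT) b0.
apply/negbTE/negP => mu0; have [k /negP] := nat_notin_seq s; apply; exact/hs.
Qed.

Lemma measureU A B : bnd (A `|` B) -> A `&` B = set0 -> mu (A `|` B) = mu A (+) mu B.
Proof.
move=> bAB AB0; have bF k : bnd (bigcup2 A B k).
  by apply: bnd_sub bAB; rewrite -bigcup2E; exact: bigcup_sup.
have tF : trivIset setT (bigcup2 A B) by rewrite -trivIset_bigcup2.
have [s [us [hs]]] := mu_measure bF tF (ltac:(by rewrite bigcup2E)).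
rewrite bigcup2E => ->.
have -> : size s = size [seq k <- [:: 0%N; 1%N] | mu (bigcup2 A B k)].
  apply/perm_size/uniq_perm => // [|k]; first by rewrite filter_uniq.
  rewrite mem_filter; apply/idP/idP => [/hs muk|/andP[/hs //]].
  by rewrite muk; case: k muk => [|[|k]] //=; rewrite measure0.
by rewrite /par /=; case: (mu A); case: (mu B).
Qed.

Lemma measure_atoms_lf : locally_finite (supp (atoms mu)).
Proof.
move=> A bA; apply: contrapT => /infiniteP/pcard_leP/injfunPex[f fA finj].
have tf : trivIset setT (fun k => [set f k]).
  by move=> i j _ _ [x [/= -> e]]; apply: finj; rewrite ?inE.
have bU : bnd (\bigcup_k [set f k]) by apply: bnd_sub bA => x [k _ ->]; case: (fA k I).
have [s [_ [hs _]]] := mu_measure (fun k => bnd1 (f k)) tf bU.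
by have [k /negP] := nat_notin_seq s; apply; apply/hs; case: (fA k I).
Qed.

Lemma measure_ball_eq_mu_of c r a : 0 < r ->
  (forall B, B `<=` ball c r -> B c -> mu B = a) ->
  forall P, P `<=` ball c r -> mu P = mu_of (atoms mu) P.
Proof.
move=> r0 hc; have ac : a = mu [set c] by apply/esym/hc => // y ->; exact: ballxx.
have off_c P : P `<=` ball c r -> ~ P c -> mu P = false.
  move=> Pb Pc; have Pcb : P `|` [set c] `<=` ball c r.
    by move=> y [/Pb //|->]; exact: ballxx.
  have PcI : P `&` [set c] = set0.
    by apply/seteqP; split => y // [Py /= yc]; apply: Pc; rewrite -yc.
  have := hc _ Pcb (or_intror erefl).
  rewrite ac measureU ?PcI //; last exact: bnd_sub Pcb (bnd_ball c r).
  by case: (mu P); case: (mu [set c]).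
move=> P Pb; have only_c y : P y -> atoms mu y -> y = c.
  move=> Py; case: (eqVneq y c) => // yc; rewrite /atoms off_c //.
    by move=> z ->; exact: Pb.
  by move=> /= cy; rewrite cy eqxx in yc.
have [Pc|Pc] := pselect (P c); first by rewrite (mu_of_local Pc only_c) /atoms -ac hc.
rewrite off_c // mu_of_eq_false // => y Py; apply/negbTE/negP => /(only_c y Py) yc.
by apply: Pc; rewrite -yc.
Qed.

End Measures.

Lemma measure_eq_of_locally_eq (R : realType) (n : nat) (mu nu : set 'rV[R]_n -> bool)
    (r : 'rV[R]_n -> R) :
  is_measure mu -> is_measure nu -> (forall c, 0 < r c) ->
  (forall c P, P `<=` ball c (r c) -> mu P = nu P) ->
  forall A, bnd A -> mu A = nu A.
Proof.
move=> hmu hnu r0 hr.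
have cover (l : seq 'rV[R]_n) A :
    bnd A -> A `<=` \bigcup_(c in [set` l]) ball c (r c) -> mu A = nu A.
  elim: l A => [|a l IH] A bA Al.
    have -> : A = set0 by apply/seteqP; split => y // /Al [].
    by rewrite !measure0.
  set N := ball a (r a).
  have NI : A `&` N `&` (A `\` N) = set0 by apply/seteqP; split => y // [[_ ?] []].
  rewrite -(setUIDK A N) !measureU ?setUIDK //.
  congr (_ (+) _); first by apply: (hr a) => y [].
  apply: IH => [|y [Ay Ny]]; first by apply: bnd_sub bA => y [].
  have [c /= lc bc] := Al y Ay; rewrite inE in lc.
  by case/orP: lc => [/eqP ca|lc]; [rewrite ca in bc | exists c].
move=> A [M hM]; set K := [set v : 'rV[R]_n | forall i, v ord0 i \in `[-M, M]].
have AK : A `<=` K.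
  move=> y Ay i; rewrite in_itv /= -ler_norml.
  exact: le_trans (coord_le_enorm y i) (hM y Ay).
have cK : cover_compact K.
  rewrite -compact_cover; apply: (@rV_compact _ _ (fun=> `[-M, M]%classic)) => _.
  exact: segment_compact.
have [|D _ KD] := cK _ K (fun c => ball c (r c)) (fun c _ => ball_open c (r c)).
  by move=> v Kv; exists v => //; exact: ballxx.
by apply: (cover D) => [|y /AK /KD] //; exists M.
Qed.

Lemma derivable_measure_eq_mu_of (R : realType) (n : nat) (mu : set 'rV[R]_n -> bool) :
  is_measure mu -> derivable mu -> forall A, bnd A -> mu A = mu_of (atoms mu) A.
Proof.
move=> hm hd; have /choice[r hr] : forall c, exists r : R,
    0 < r /\ forall B, B `<=` ball c r -> B c -> mu B = atoms mu c.
  move=> c; have [a ha] := hd c; have [r r0 h] := dmu_at_ball ha.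
  by exists r; split => // B Bc Bx; rewrite h // (dmu_at_set1 ha).
apply: (measure_eq_of_locally_eq hm (mu_of_measure (measure_atoms_lf hm))
  (fun c => (hr c).1)).
move=> c P; case: (hr c) => rc hc; exact: (measure_ball_eq_mu_of hm rc hc).
Qed.

Theorem theorem5p17 (R : realType) (n : nat) (hn : (1 <= n)%N) :
  (forall g : 'rV[R]_n -> bool, locally_finite (supp g) ->
     is_measure (mu_of g) /\ derivable (mu_of g) /\
     (forall x, dmu_at (mu_of g) x (g x)))
  /\
  (forall mu : set 'rV[R]_n -> bool, is_measure mu -> derivable mu ->
     exists g : 'rV[R]_n -> bool,
       (locally_finite (supp g) /\ (forall A, bnd A -> mu A = mu_of g A)) /\
       (forall g' : 'rV[R]_n -> bool,
          locally_finite (supp g') /\ (forall A, bnd A -> mu A = mu_of g' A) ->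
          g' = g) /\
       (forall x, dmu_at mu x (g x))).
Proof.
split=> [g lf|mu hm hd].
  split; first exact: mu_of_measure.
  by split=> x; [exists (g x)|]; exact: mu_of_dmu_at.
exists (atoms mu); split; [|split].
- by split; [exact: measure_atoms_lf hm | exact: derivable_measure_eq_mu_of hm hd].
- by move=> g' [_ hg']; apply/funext => x; rewrite -[g' x]mu_of_set1 -(hg' _ (bnd1 x)).
- by move=> x; have [a ha] := hd x; rewrite /atoms -(dmu_at_set1 ha).
Qed.
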